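(* Let $n\ge1$, identify $\mathbb{R}^{n+1}=\mathbb{R}^n\times\mathbb{R}$, let $f\colon\mathbb{R}^n\to(0,\infty)$ be continuous with epigraph $L=\{(x,y)\mid f(x)\le y\}$, and let $K\subset\mathbb{R}^{n+1}$ be a nonempty closed set with $K\cap L=\emptyset$ containing a point $(x_*,y_* )$ with $y_*\le 0$. Let $G^+$, $G^-$ be the upper and lower equidistant functions associated with $K$ and $L$. Then for every $x\in\mathbb{R}^n$ and $y\in\mathbb{R}$: if $y<G^-(x)$ then $d((x,y),K)<d((x,y),L)$, and if $G^+(x)<y$ then $d((x,y),K)>d((x,y),L)$.
   Context: $d(p,A)=\inf\{|p-q|\mid q\in A\}$ (Euclidean distance). The upper and lower equidistant functions are $G^+(x)=\sup\{y\in\mathbb{R}\mid d((x,y),K)=d((x,y),L)\}$ and $G^-(x)=\inf\{y\in\mathbb{R}\mid d((x,y),K)=d((x,y),L)\}$ (under the stated assumptions these sets are nonempty and bounded, so $G^\pm(x)$ are real numbers). *)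

(* R^(n+1) is identified with 'rV[R]_n * R. *)
From HB Require Import structures.
From mathcomp Require Import all_boot all_order all_algebra.
From mathcomp Require Import all_classical all_reals all_analysis.
Set Implicit Arguments. Unset Strict Implicit. Unset Printing Implicit Defensive.
Import Order.TTheory GRing.Theory Num.Theory.
Import numFieldNormedType.Exports.
Local Open Scope classical_set_scope.
Local Open Scope ring_scope.

Section Defs.
Variables (R : realType) (n : nat).
Definition pt := ('rV[R]_n * R)%type.

Definition edist (p q : pt) : R :=
  Num.sqrt (\sum_(i < n) (p.1 ord0 i - q.1 ord0 i) ^+ 2 + (p.2 - q.2) ^+ 2).

Definition setdist (p : pt) (A : set pt) : R :=
  inf [set r | exists2 q, A q & r = edist p q].

Definition epigraph (f : 'rV[R]_n -> R) : set pt := [set p | f p.1 <= p.2].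

Definition equi_set (K L : set pt) (x : 'rV[R]_n) : set R :=
  [set y | setdist (x, y) K = setdist (x, y) L].

Definition Gplus (K L : set pt) (x : 'rV[R]_n) : R := sup (equi_set K L x).
Definition Gminus (K L : set pt) (x : 'rV[R]_n) : R := inf (equi_set K L x).
End Defs.

From Pilot Require Import Defs.
From HB Require Import structures.
From mathcomp Require Import all_boot all_order all_algebra.
From mathcomp Require Import all_classical all_reals all_analysis.
From mathcomp Require Import lra.
Import Order.TTheory GRing.Theory Num.Theory.
Import numFieldNormedType.Exports.
Local Open Scope classical_set_scope.
Local Open Scope ring_scope.
Set Implicit Arguments. Unset Strict Implicit. Unset Printing Implicit Defensive.

(* Put h(t) = d((x,t),K) - d((x,t),L).  Both distances are 1-Lipschitz in t, so
   h is continuous, and its zero set is the equidistant set over x.  For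
   t >= f(x) the point (x,t) lies in L while K is closed and disjoint from L,
   so h(t) > 0.  For t very negative h(t) < 0: the point of K with y* <= 0 is at
   distance about |t|, whereas L lies above the positive function f, which is
   bounded away from 0 on a compact box around x.  By the intermediate value
   theorem h therefore keeps the sign of -oo below its lowest zero G^-(x) and
   the sign of +oo above its highest zero G^+(x). *)

Section SetDist.
Variables (R : realType) (n : nat).
Implicit Types (p q : pt R n) (A : set (pt R n)).

Lemma sumsq_ge0 (u v : 'rV[R]_n) : 0 <= \sum_(i < n) (u ord0 i - v ord0 i) ^+ 2.
Proof. by apply: sumr_ge0 => i _; exact: sqr_ge0. Qed.

Lemma sumsq_ge_term (u v : 'rV[R]_n) j :
  (u ord0 j - v ord0 j) ^+ 2 <= \sum_(i < n) (u ord0 i - v ord0 i) ^+ 2.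
Proof.
by rewrite (bigD1 j) //= lerDl; apply: sumr_ge0 => i _; exact: sqr_ge0.
Qed.

Lemma edist_ge0 p q : 0 <= Defs.edist p q.
Proof. exact: sqrtr_ge0. Qed.

Lemma edist_xx p : Defs.edist p p = 0.
Proof.
rewrite /Defs.edist big1 ?subrr ?expr0n ?addr0 ?sqrtr0 // => i _.
by rewrite subrr expr0n.
Qed.

Lemma coord_dist_le_edist p q j : `|p.1 ord0 j - q.1 ord0 j| <= Defs.edist p q.
Proof.
rewrite -sqrtr_sqr; apply: ler_wsqrtr.
by apply: le_trans (sumsq_ge_term p.1 q.1 j) _; rewrite lerDl sqr_ge0.
Qed.

Lemma snd_dist_le_edist p q : `|p.2 - q.2| <= Defs.edist p q.
Proof. by rewrite -sqrtr_sqr; apply: ler_wsqrtr; rewrite lerDr sumsq_ge0. Qed.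

Lemma edist_lt_ball p q e : Defs.edist p q < e -> ball p e q.
Proof.
move=> pqe; split; last exact: le_lt_trans (snd_dist_le_edist p q) pqe.
split=> [|i j]; first exact: le_lt_trans (edist_ge0 p q) pqe.
by rewrite (ord1 i); exact: le_lt_trans (coord_dist_le_edist p q j) pqe.
Qed.

Lemma setdist_le A p q : A q -> setdist p A <= Defs.edist p q.
Proof.
move=> Aq; apply: ge_inf; last by exists q.
by exists 0 => r [q' _ ->]; exact: edist_ge0.
Qed.

Lemma setdist_ge A p c : A !=set0 -> (forall q, A q -> c <= Defs.edist p q) ->
  c <= setdist p A.
Proof.
move=> [q Aq] cle; apply: lb_le_inf; first by exists (Defs.edist p q), q.
by move=> r [q' Aq' ->]; exact: cle.
Qed.

Lemma setdist_ge0 A p : A !=set0 -> 0 <= setdist p A.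
Proof. by move=> A0; apply: setdist_ge => // q _; exact: edist_ge0. Qed.

Lemma setdist_eq0 A p : A p -> setdist p A = 0.
Proof.
move=> Ap; apply/le_anti; rewrite setdist_ge0 //; last by exists p.
by rewrite -(edist_xx p) setdist_le.
Qed.

Lemma setdist_gt0 A p : closed A -> A !=set0 -> ~ A p -> 0 < setdist p A.
Proof.
move=> Acl A0 nAp.
have /nbhs_ballP[e /= e0 ballA] : nbhs p (~` A).
  by move: (closed_openC Acl); rewrite openE => /(_ p nAp).
apply: lt_le_trans e0 _; apply: setdist_ge => // q Aq.
by rewrite leNgt; apply/negP => /edist_lt_ball /ballA.
Qed.

(* Triangle inequality for (sqrt S, a) = (sqrt S, b) + (0, a - b). *)
Lemma sqrtrD_sqr_le (S a b : R) : 0 <= S ->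
  Num.sqrt (S + a ^+ 2) <= Num.sqrt (S + b ^+ 2) + `|a - b|.
Proof.
move=> S0; set s := Num.sqrt (S + b ^+ 2).
have s0 : 0 <= s by exact: sqrtr_ge0.
have ss : s ^+ 2 = S + b ^+ 2 by rewrite sqr_sqrtr // addr_ge0 // sqr_ge0.
have bs : `|b| <= s by rewrite -sqrtr_sqr ler_wsqrtr // lerDr.
have dd : `|a - b| ^+ 2 = (a - b) ^+ 2 by rewrite real_normK ?num_real.
have bb : `|b| ^+ 2 = b ^+ 2 by rewrite real_normK ?num_real.
have bd : b * (a - b) <= `|b| * `|a - b|.
  by rewrite -normrM real_ler_norm ?num_real.
have b0 : 0 <= `|b| by [].
have d0 : 0 <= `|a - b| by [].
rewrite -(ger0_norm (addr_ge0 s0 d0)) -sqrtr_sqr ler_wsqrtr //; nra.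
Qed.

Lemma edist_shift_le x y y' q :
  Defs.edist (x, y) q <= Defs.edist (x, y') q + `|y - y'|.
Proof.
rewrite /Defs.edist /=.
have -> : y - y' = (y - q.2) - (y' - q.2) by rewrite opprB addrA subrK.
exact: sqrtrD_sqr_le (sumsq_ge0 _ _).
Qed.

Lemma setdist_shift_le A x y y' : A !=set0 ->
  setdist (x, y) A <= setdist (x, y') A + `|y - y'|.
Proof.
move=> A0; rewrite -lerBlDr; apply: setdist_ge => // q Aq.
by rewrite lerBlDr (le_trans _ (edist_shift_le x y y' q)) ?setdist_le.
Qed.

Lemma continuous_setdist_shift A x : A !=set0 ->
  continuous (fun t : R => setdist (x, t) A).
Proof.
move=> A0 t; apply/cvgrPdist_le => e e0; near=> s.
have tse : `|t - s| <= e.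
  by near: s; exact: (@cvgrPdist_le _ R^o _ _ _ id t).1 cvg_id e e0.
have := setdist_shift_le x s t A0; have := setdist_shift_le x t s A0.
by rewrite ler_norml [`|s - t|]distrC => ? ?; apply/andP; split; lra.
Unshelve. all: end_near.
Qed.

End SetDist.

Section EpigraphBelow.
Variables (R : realType) (n : nat).

Definition rV_box (c : 'rV[R]_n) (r : R) : set 'rV[R]_n :=
  [set v | forall i, `[c ord0 i - r, c ord0 i + r]%classic (v ord0 i)].

Lemma rV_box_center c r : 0 <= r -> rV_box c r c.
Proof. by move=> r0 i /=; rewrite in_itv /=; apply/andP; split; lra. Qed.

Lemma sumsq_ge_notin_rV_box c r v : 0 <= r -> ~ rV_box c r v ->
  r ^+ 2 <= \sum_(i < n) (c ord0 i - v ord0 i) ^+ 2.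
Proof.
move=> r0 /existsNP[i /=]; rewrite in_itv /= => vi.
have {}vi : r < `|c ord0 i - v ord0 i|.
  rewrite ltNge ler_norml; apply/negP => /andP[? ?].
  by apply: vi; apply/andP; split; lra.
apply: le_trans (sumsq_ge_term c v i).
by rewrite -[leRHS]real_normK ?num_real //; nra.
Qed.

Lemma continuous_pos_lbound_rV_box (f : 'rV[R]_n -> R) c r : continuous f ->
  (forall v, 0 < f v) -> 0 <= r ->
  exists2 m, 0 < m & forall v, rV_box c r v -> m <= f v.
Proof.
move=> fc fpos r0.
have Bcompact : compact (rV_box c r).
  apply: (@rV_compact _ _ (fun i => `[c ord0 i - r, c ord0 i + r]%classic)).
  by move=> i; exact: segment_compact.
have [|v _ vmin] := EVT_min_rV _ Bcompact (continuous_subspaceT fc).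
  by exists c; exact: rV_box_center.
by exists (f v) => // w Bw; apply: vmin; rewrite inE.
Qed.

Lemma setdist_epigraph_ge (f : 'rV[R]_n -> R) c r m t :
  (forall v, 0 <= f v) -> 0 <= r -> (forall v, rV_box c r v -> m <= f v) ->
  t <= 0 ->
  Num.min (m - t) (Num.sqrt (r ^+ 2 + t ^+ 2)) <= setdist (c, t) (epigraph f).
Proof.
move=> f0 r0 fm t0; apply: setdist_ge => [|[v y]]; rewrite /epigraph /=.
  by exists (c, f c); rewrite /=.
move=> fvy; have fv0 := f0 v; rewrite ge_min.
have [Bv|nBv] := pselect (rV_box c r v).
  have mfv := fm v Bv; apply/orP; left.
  by apply: le_trans (snd_dist_le_edist _ _); rewrite /= distrC ger0_norm; lra.
apply/orP; right; apply: ler_wsqrtr; apply: lerD.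
  exact: sumsq_ge_notin_rV_box.
by rewrite /=; nra.
Qed.

Lemma setdist_le_sqrt_sumsq (K : set (pt R n)) x p t : K p -> t <= p.2 <= 0 ->
  setdist (x, t) K <=
  Num.sqrt (\sum_(i < n) (x ord0 i - p.1 ord0 i) ^+ 2 + t ^+ 2).
Proof.
move=> Kp /andP[tp p0]; apply: le_trans (setdist_le _ Kp) _.
by apply: ler_wsqrtr; rewrite lerD2l /=; nra.
Qed.

(* Over the box of radius r = S + 1 around x the graph of f stays at height
   >= m > 0; outside it, L is horizontally at distance >= r > sqrt S from x,
   further than p is. *)
Lemma setdist_lt_epigraph_below (f : 'rV[R]_n -> R) (K : set (pt R n)) x :
  continuous f -> (forall v, 0 < f v) -> (exists2 p : pt R n, K p & p.2 <= 0) ->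
  exists a, forall t, t <= a -> setdist (x, t) K < setdist (x, t) (epigraph f).
Proof.
move=> fc fpos [p Kp p0].
set S := \sum_(i < n) (x ord0 i - p.1 ord0 i) ^+ 2.
have S0 : 0 <= S by exact: sumsq_ge0.
have r0 : 0 <= S + 1 by lra.
have [m m0 fm] := continuous_pos_lbound_rV_box x fc fpos r0.
have mSm : m * (S / m) = S by rewrite mulrC divfK // gt_eqF.
exists (p.2 - S / m - 1) => t ta.
have Sm0 : 0 <= S / m by rewrite divr_ge0 // ltW.
have t0 : t <= 0 by lra.
have tp : t <= p.2 <= 0 by apply/andP; split; lra.
have mt : m * t <= - S - m by nra.
apply: le_lt_trans (setdist_le_sqrt_sumsq x Kp tp) _.
apply: lt_le_trans (setdist_epigraph_ge (fun v => ltW (fpos v)) r0 fm t0).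
rewrite lt_min; apply/andP; split.
  by rewrite -/S -[m - t]ger0_norm -?sqrtr_sqr ?ltr_sqrt; [nra | nra | lra].
by rewrite -/S ltr_sqrt; nra.
Qed.

End EpigraphBelow.

Section ZerosOfContinuous.
Variables (R : realType) (h : R -> R).
Hypothesis hc : continuous h.

Lemma lt0_lt_inf_zeros a y : (forall t, t <= a -> h t < 0) ->
  y < inf [set t | h t = 0] -> h y < 0.
Proof.
move=> ha yZ; rewrite ltNge; apply/negP => hy0.
have ay : a <= y by rewrite leNgt; apply/negP => /ltW /ha; lra.
have [c] : exists2 c, c \in `[a, y] & h c = 0.
  apply: IVT => //; first exact: continuous_subspaceT.
  by rewrite ge_min le_max (ltW (ha a (lexx a))) hy0 orbT.
rewrite in_itv /= => /andP[ac cy] hc0.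
have : inf [set t | h t = 0] <= c.
  apply: ge_inf => //; exists a => z /= hz0.
  by rewrite leNgt; apply/negP => /ltW /ha; lra.
lra.
Qed.

Lemma gt0_gt_sup_zeros b y : (forall t, b <= t -> 0 < h t) ->
  sup [set t | h t = 0] < y -> 0 < h y.
Proof.
move=> hb Zy; rewrite ltNge; apply/negP => hy0.
have yb : y <= b by rewrite leNgt; apply/negP => /ltW /hb; lra.
have [c] : exists2 c, c \in `[y, b] & h c = 0.
  apply: IVT => //; first exact: continuous_subspaceT.
  by rewrite ge_min le_max hy0 (ltW (hb b (lexx b))) orbT.
rewrite in_itv /= => /andP[yc cb] hc0.
have : c <= sup [set t | h t = 0].
  apply: ub_le_sup => //; exists b => z /= hz0.
  by rewrite leNgt; apply/negP => /ltW /hb; lra.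
lra.
Qed.

End ZerosOfContinuous.

Theorem corollary1 (R : realType) (n : nat) (hn : (1 <= n)%N)
  (f : 'rV[R]_n -> R) (hfc : continuous f) (hfpos : forall x, 0 < f x)
  (K : set ('rV[R]_n * R)%type) (hKcl : closed K) (hKne : K !=set0)
  (hKL : K `&` epigraph f = set0)
  (hstar : exists2 p : ('rV[R]_n * R)%type, K p & p.2 <= 0) :
  forall (x : 'rV[R]_n) (y : R),
    (y < Gminus K (epigraph f) x ->
       setdist (x, y) K < setdist (x, y) (epigraph f)) /\
    (Gplus K (epigraph f) x < y ->
       setdist (x, y) K > setdist (x, y) (epigraph f)).
Proof.
move=> x y; set L := epigraph f.
have L0 : L !=set0 by exists (x, f x); rewrite /L /epigraph /=.
pose h t := setdist (x, t) K - setdist (x, t) L.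
have hc : continuous h.
  move=> t; apply: (@continuousB _ _ _ (fun s => setdist (x, s) K)
                                       (fun s => setdist (x, s) L));
  exact: continuous_setdist_shift.
have equiE : equi_set K L x = [set t | h t = 0].
  apply/seteqP; split=> t; rewrite /equi_set /h /=.
    by move=> ->; rewrite subrr.
  by move/eqP; rewrite subr_eq0 => /eqP.
have [a ha] : exists a, forall t, t <= a -> h t < 0.
  have [a ha] := setdist_lt_epigraph_below x hfc hfpos hstar.
  by exists a => t /ha; rewrite subr_lt0.
have hb t : f x <= t -> 0 < h t.
  move=> fxt; rewrite /h (setdist_eq0 (fxt : L (x, t))) subr0.
  apply: setdist_gt0 => // Kxt.
  by have : (K `&` L) (x, t) by []; rewrite hKL.
rewrite /Gminus /Gplus equiE; split=> yZ.
  by rewrite -subr_lt0; exact: (lt0_lt_inf_zeros hc ha yZ).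
by rewrite -subr_gt0; exact: (gt0_gt_sup_zeros hc hb yZ).
Qed.
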